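(* Let $\mathbf q\in\mathbb R^{2nK}_{\ge 0}$, $r\ge 0$ and $T\in\mathbb R$. For a feature index $k\in[p]$ define $$\mathrm{Prune}(k\mid\mathbf q,r)=\sum_{i\in[n]}\sum_{l\in\mathcal D_i}q_{il}\max\{x_{i,k},x_{l,k}\}^2+r\sqrt{\sum_{i\in[n]}\Big[\sum_{l\in\mathcal D_i}\max\{x_{i,k},x_{l,k}\}^4+\sum_{j\in\mathcal S_i}\max\{x_{i,k},x_{j,k}\}^4\Big]}.$$ If $\mathrm{Prune}(k\mid\mathbf q,r)\le T$, then for every descendant $k'\supseteq k$ of $k$, $$\mathbf C_{k',:}\mathbf q+r\|\mathbf C_{k',:}\|_2\le T.$$
   Context: Let $n,K,p\ge 1$ be integers and $[n]=\{1,\dots,n\}$. For each $i\in[n]$ let $\mathbf x_i=(x_{i,1},\dots,x_{i,p})^\top\in\mathbb R^p$ have nonnegative entries, and let $\mathcal D_i,\mathcal S_i\subseteq[n]$ be sets of size $K$ (indices of selected samples of a different class, resp. the same class, as sample $i$). For $i,j\in[n]$ put $\mathbf c_{ij}=(\mathbf x_i-\mathbf x_j)\circ(\mathbf x_i-\mathbf x_j)\in\mathbb R^p$, where $\circ$ is the entrywise product. Vectors in $\mathbb R^{2nK}$ are indexed by the $nK$ pairs $(i,l)$ with $i\in[n]$, $l\in\mathcal D_i$ (''different-class pairs'') together with the $nK$ pairs $(i,j)$ with $i\in[n]$, $j\in\mathcal S_i$ (''same-class pairs''); so $\mathbf q$ has entries $q_{il}$ and $q_{ij}$. Let $\mathbf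 C\in\mathbb R^{p\times 2nK}$ be the matrix whose column for a different-class pair $(i,l)$ is $\mathbf c_{il}$ and whose column for a same-class pair $(i,j)$ is $-\mathbf c_{ij}$; $\mathbf C_{k,:}$ denotes its $k$-th row. The feature indices $[p]$ are nodes of a rooted tree (a graph-mining tree: feature $k$ is $x_{i,k}=g(\#(H_k\sqsubseteq G_i))$, where $H_k$ is a subgraph attached to node $k$, $G_i$ is the $i$-th input graph, $\#(H\sqsubseteq G)$ is the number of non-overlapping occurrences of $H$ in $G$, $g$ is nonnegative and nondecreasing, and each node's subgraph is a subgraph of its children's subgraphs). Write $k'\supseteq k$ if node $k'$ is a descendant of node $k$. The property used is: whenever $k'\supseteq k$, we have $0\le x_{i,k'}\le x_{i,k}$ for all $i\in[n]$. *)

From mathcomp Require Import all_boot all_order all_algebra.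
Unset Printing Implicit Defensive.
Import Order.TTheory GRing.Theory Num.Theory.
Local Open Scope ring_scope.

(* D i, S i : index sets (size K); the vector q in R^{2nK} is given by its
   entries qD i l (for l \in D i) and qS i j (for j \in S i). *)

Section Defs.
Variables (R : rcfType) (n p : nat).

Definition cc (x : 'I_n -> 'I_p -> R) (i j : 'I_n) (k : 'I_p) : R :=
  (x i k - x j k) ^+ 2.

Definition Crow_q (x : 'I_n -> 'I_p -> R) (D S : 'I_n -> {set 'I_n})
    (qD qS : 'I_n -> 'I_n -> R) (k : 'I_p) : R :=
  \sum_(i < n) (\sum_(l in D i) qD i l * cc x i l k)
  + \sum_(i < n) (\sum_(j in S i) qS i j * (- cc x i j k)).

Definition Crow_norm (x : 'I_n -> 'I_p -> R) (D S : 'I_n -> {set 'I_n})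
    (k : 'I_p) : R :=
  Num.sqrt (\sum_(i < n) (\sum_(l in D i) (cc x i l k) ^+ 2
                          + \sum_(j in S i) (- cc x i j k) ^+ 2)).

Definition Prune (x : 'I_n -> 'I_p -> R) (D S : 'I_n -> {set 'I_n})
    (qD : 'I_n -> 'I_n -> R) (r : R) (k : 'I_p) : R :=
  \sum_(i < n) (\sum_(l in D i) qD i l * (Num.max (x i k) (x l k)) ^+ 2)
  + r * Num.sqrt (\sum_(i < n) (\sum_(l in D i) (Num.max (x i k) (x l k)) ^+ 4
                                + \sum_(j in S i) (Num.max (x i k) (x j k)) ^+ 4)).

End Defs.

Arguments cc {R n p}.
Arguments Crow_q {R n p}.
Arguments Crow_norm {R n p}.
Arguments Prune {R n p}.

From mathcomp Require Import all_boot all_order all_algebra.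
From mathcomp Require Import lra.
Import Order.TTheory GRing.Theory Num.Theory.
Local Open Scope ring_scope.

(* Descending the tree shrinks every feature value towards 0, so each
   (x_{i,k'} - x_{j,k'})^2 is at most max(x_{i,k}, x_{j,k})^2.  Hence the
   different-class part of C_{k',:} q is dominated by the first sum of Prune,
   the same-class part is nonpositive, and the entries of C_{k',:} are
   dominated in absolute value, which bounds its norm by the square root in
   Prune. *)

Lemma sqr_subr_le_max (R : realDomainType) (a b A B : R) :
  0 <= a <= A -> 0 <= b <= B -> (a - b) ^+ 2 <= Num.max A B ^+ 2.
Proof.
move=> /andP[a0 aA] /andP[b0 bB].
have AM : A <= Num.max A B by rewrite le_max lexx.
have BM : B <= Num.max A B by rewrite le_max lexx orbT.
rewrite !expr2; nra.
Qed.

Lemma sqr_sqr_subr_le_max (R : realDomainType) (a b A B : R) :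
  0 <= a <= A -> 0 <= b <= B -> ((a - b) ^+ 2) ^+ 2 <= Num.max A B ^+ 4.
Proof.
move=> ha hb; rewrite (exprM _ 2 2).
by apply: lerXn2r; rewrite ?nnegrE ?sqr_ge0 ?sqr_subr_le_max.
Qed.

Section DescendantBounds.
Variables (R : rcfType) (n p : nat).
Variables (x : 'I_n -> 'I_p -> R) (D S : 'I_n -> {set 'I_n}).
Variables (k k' : 'I_p).
Hypothesis x_desc : forall i, 0 <= x i k' <= x i k.

Lemma cc_desc_le_max i j : cc x i j k' <= Num.max (x i k) (x j k) ^+ 2.
Proof. exact: sqr_subr_le_max. Qed.

Lemma Crow_q_desc_le (qD qS : 'I_n -> 'I_n -> R) :
  (forall i l, l \in D i -> 0 <= qD i l) ->
  (forall i j, j \in S i -> 0 <= qS i j) ->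
  Crow_q x D S qD qS k' <=
    \sum_(i < n) \sum_(l in D i) qD i l * Num.max (x i k) (x l k) ^+ 2.
Proof.
move=> qD0 qS0; rewrite /Crow_q -[leRHS]addr0; apply: lerD.
- apply: ler_sum => i _; apply: ler_sum => l Dl.
  by rewrite ler_wpM2l ?qD0 ?cc_desc_le_max.
- apply: sumr_le0 => i _; apply: sumr_le0 => j Sj.
  by rewrite mulrN oppr_le0 mulr_ge0 ?qS0 ?sqr_ge0.
Qed.

Lemma Crow_norm_desc_le :
  Crow_norm x D S k' <=
    Num.sqrt (\sum_(i < n) (\sum_(l in D i) Num.max (x i k) (x l k) ^+ 4
                            + \sum_(j in S i) Num.max (x i k) (x j k) ^+ 4)).
Proof.
apply: ler_wsqrtr; apply: ler_sum => i _.
by apply: lerD; apply: ler_sum => j _; rewrite ?sqrrN sqr_sqr_subr_le_max.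
Qed.

End DescendantBounds.

Theorem lemma1 (R : rcfType) (n K p : nat)
  (x : 'I_n -> 'I_p -> R) (D S : 'I_n -> {set 'I_n})
  (desc : 'I_p -> 'I_p -> Prop) (* desc k' k : node k' is a descendant of node k *)
  (qD qS : 'I_n -> 'I_n -> R) (r T : R) (k : 'I_p) :
  (1 <= n)%N -> (1 <= K)%N -> (1 <= p)%N ->
  (forall i, #|D i| = K) -> (forall i, #|S i| = K) ->
  (forall i k0, 0 <= x i k0) ->
  (forall k1 k2, desc k2 k1 -> forall i, 0 <= x i k2 <= x i k1) ->
  (forall i l, l \in D i -> 0 <= qD i l) ->
  (forall i j, j \in S i -> 0 <= qS i j) ->
  0 <= r ->
  Prune x D S qD r k <= T ->
  forall k', desc k' k -> Crow_q x D S qD qS k' + r * Crow_norm x D S k' <= T.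
Proof.
move=> _ _ _ _ _ _ x_mono qD0 qS0 r0 prune_le k' desc_k'k.
have x_desc := x_mono _ _ desc_k'k.
apply: le_trans prune_le; apply: lerD; first exact: Crow_q_desc_le.
exact/ler_wpM2l/Crow_norm_desc_le.
Qed.
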